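(* Let $K\ge2$, $r\in[0,1]^K$ with a unique maximizing index $a^*$ (i.e. $r(a^* )>\max_{a\ne a^*}r(a)$), and $g(\theta)=\pi_\theta^\top r$ with $\pi_\theta=\mathrm{softmax}(\theta)$. Let $\theta_1\in\mathbb{R}^K$ be arbitrary and define the normalized policy gradient iterates $\theta_{t+1}=\theta_t+\eta\,\nabla g(\theta_t)/\|\nabla g(\theta_t)\|_2$ with $\eta=1/6$. Then $\inf_{t\ge1}\pi_{\theta_t}(a^* )>0$.
   Context: $\mathrm{softmax}(\theta)(a)=e^{\theta(a)}/\sum_{a'}e^{\theta(a')}$; $\nabla g(\theta)=(\mathrm{diag}(\pi_\theta)-\pi_\theta\pi_\theta^\top)r$, which is nonzero for every $\theta$ under the stated assumptions. *)

From HB Require Import structures.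
From mathcomp Require Import all_boot all_order all_algebra.
From mathcomp Require Import all_classical all_reals all_analysis.
Set Implicit Arguments. Unset Strict Implicit. Unset Printing Implicit Defensive.
Import Order.TTheory GRing.Theory Num.Theory.
Local Open Scope ring_scope.

Section Defs.
Variables (R : realType) (K : nat).

Definition softmax (theta : 'I_K -> R) (a : 'I_K) : R :=
  expR (theta a) / \sum_(b < K) expR (theta b).

Definition gval (r theta : 'I_K -> R) : R :=
  \sum_(a < K) softmax theta a * r a.

(* grad g(theta) = (diag(pi) - pi pi^T) r, componentwise:
   pi(a) r(a) - pi(a) * (pi^T r) *)
Definition grad_g (r theta : 'I_K -> R) (a : 'I_K) : R :=
  softmax theta a * r a - softmax theta a * gval r theta.

Definition norm2 (v : 'I_K -> R) : R := Num.sqrt (\sum_(a < K) v a ^+ 2).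

(* normalized policy gradient iterates: npg_iter 0 = theta_1,
   npg_iter t = theta_{t+1} *)
Fixpoint npg_iter (eta : R) (r theta1 : 'I_K -> R) (t : nat) : 'I_K -> R :=
  match t with
  | 0%N => theta1
  | t'.+1 => let th := npg_iter eta r theta1 t' in
             fun a => th a + eta * (grad_g r th a / norm2 (grad_g r th))
  end.
End Defs.

From HB Require Import structures.
From mathcomp Require Import all_boot all_order all_algebra.
From mathcomp Require Import all_classical all_reals all_analysis.
From mathcomp Require Import ring lra.
Import Order.TTheory GRing.Theory Num.Theory.
Local Open Scope ring_scope.
Set Implicit Arguments. Unset Strict Implicit.

(* Write  rel th a = th a - th astar  for the logits relative to
   the optimal action, so that  softmax th a = softmax th astar * e^(rel th a);
   a uniform upper bound  rel th a <= B  therefore gives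
   softmax th astar >= 1 / (K e^B).  To bound the relative logits we use the
   potential  Phi th = sum_a max (rel th a, thresh - 2 eta),  where
   thresh = ln (Delta / 2K)  and  Delta  is the reward gap.  One normalized
   step moves every relative logit by at most  2 eta.
   - If  softmax th astar <= 1/2,  the gradient coordinate of  astar
     dominates those of the actions with  rel th a < thresh,  and also their
     total, so Phi does not increase.
   - If  softmax th astar > 1/2,  all relative logits are <= 0, so after one
     step  Phi <= 2 eta K.
   Hence Phi stays below  max (Phi theta1, 2 eta K)  along the iterates, which
   bounds every relative logit. *)

Section Softmax.
Variables (R : realType) (K : nat) (astar : 'I_K).

Lemma K_gt0 : (0 < K)%N.
Proof. exact: leq_ltn_trans (leq0n astar) (ltn_ord astar). Qed.

Lemma sum_expR_gt0 (th : 'I_K -> R) : 0 < \sum_(b < K) expR (th b).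
Proof.
rewrite (bigD1 astar) //= ltr_pwDl ?expR_gt0 //.
by rewrite sumr_ge0 // => b _; exact/ltW/expR_gt0.
Qed.

Lemma softmax_gt0 (th : 'I_K -> R) a : 0 < softmax th a.
Proof. by rewrite /softmax divr_gt0 ?expR_gt0 ?sum_expR_gt0. Qed.

Lemma softmax_sum1 (th : 'I_K -> R) : \sum_(a < K) softmax th a = 1.
Proof. by rewrite /softmax -mulr_suml divff // lt0r_neq0 ?sum_expR_gt0. Qed.

Definition rel (th : 'I_K -> R) (a : 'I_K) : R := th a - th astar.

Lemma softmax_rel (th : 'I_K -> R) a :
  softmax th a = softmax th astar * expR (rel th a).
Proof.
rewrite /softmax /rel expRD expRN.
have e_pos := expR_gt0 (th astar); have Z_pos := sum_expR_gt0 th.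
by field; rewrite !lt0r_neq0.
Qed.

Lemma softmax_le_of_rel (th : 'I_K -> R) a e :
  0 < e -> rel th a <= ln e -> softmax th a <= softmax th astar * e.
Proof.
move=> e0 hrel; rewrite softmax_rel ler_wpM2l ?(ltW (softmax_gt0 _ _)) //.
by rewrite -[e in _ <= e]lnK ?posrE // ler_expR.
Qed.

Lemma rel_le0_of_majority (th : 'I_K -> R) a :
  1 / 2 < softmax th astar -> rel th a <= 0.
Proof.
move=> hmaj; have [->|neq] := eqVneq a astar; first by rewrite /rel subrr.
have hsum := softmax_sum1 th.
rewrite (bigD1 astar) //= (bigD1 a) //= in hsum.
have rest : 0 <= \sum_(b < K | (b != astar) && (b != a)) softmax th b.
  by apply: sumr_ge0 => b _; exact/ltW/softmax_gt0.
have : softmax th astar * expR (rel th a) < softmax th astar * 1.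
  by rewrite -softmax_rel mulr1; lra.
by rewrite ltr_pM2l ?softmax_gt0 // -expR0 ltr_expR => /ltW.
Qed.

Lemma softmax_astar_lower_bound (th : 'I_K -> R) B :
  (forall a, rel th a <= B) -> 1 / (K%:R * expR B) <= softmax th astar.
Proof.
move=> hB; have KB : 0 < K%:R * expR B.
  by rewrite mulr_gt0 ?ltr0n ?K_gt0 ?expR_gt0.
rewrite ler_pdivrMr // -[X in X <= _](softmax_sum1 th).
apply: (@le_trans _ _ (\sum_(b < K) softmax th astar * expR B)).
  apply: ler_sum => b _; rewrite softmax_rel.
  by rewrite ler_wpM2l ?(ltW (softmax_gt0 _ _)) // ler_expR.
by rewrite sumr_const card_ord -[_ *+ K]mulr_natr mulrAC mulrA.
Qed.

End Softmax.

Section Gradient.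
Variables (R : realType) (K : nat) (r : 'I_K -> R) (astar : 'I_K).
Hypothesis hr : forall a, 0 <= r a <= 1.

Lemma gval_01 (th : 'I_K -> R) : 0 <= gval r th <= 1.
Proof.
have pi_ge0 a : 0 <= softmax th a by exact/ltW/(softmax_gt0 astar).
apply/andP; split.
  by rewrite sumr_ge0 // => a _; rewrite mulr_ge0 //; case/andP: (hr a).
rewrite -(softmax_sum1 astar th) ler_sum // => a _.
by rewrite ler_piMr //; case/andP: (hr a).
Qed.

Lemma grad_gE (th : 'I_K -> R) a :
  grad_g r th a = softmax th a * (r a - gval r th).
Proof. by rewrite /grad_g mulrBr. Qed.

(* Since rewards and the value lie in [0,1], |grad_a| <= pi_a. *)
Lemma grad_abs_le_softmax (th : 'I_K -> R) a : `|grad_g r th a| <= softmax th a.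
Proof.
have pi0 := softmax_gt0 astar th a.
rewrite grad_gE normrM gtr0_norm // ler_piMr ?(ltW pi0) //.
have /andP[? ?] := hr a; have /andP[? ?] := gval_01 th.
rewrite ler_norml; apply/andP; split; lra.
Qed.

Lemma grad_sum0 (th : 'I_K -> R) : \sum_(a < K) grad_g r th a = 0.
Proof. by rewrite /grad_g sumrB -mulr_suml softmax_sum1 // mul1r subrr. Qed.

Lemma normalized_grad_abs_le1 (th : 'I_K -> R) a :
  `|grad_g r th a / norm2 (grad_g r th)| <= 1.
Proof.
have hle : `|grad_g r th a| <= norm2 (grad_g r th).
  rewrite /norm2 -sqrtr_sqr ler_sqrt ?sumr_ge0 // => [|b _]; last exact: sqr_ge0.
  by rewrite (bigD1 a) //= lerDl sumr_ge0 // => b _; exact: sqr_ge0.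
have [->|nz] := eqVneq (norm2 (grad_g r th)) 0.
  by rewrite invr0 mulr0 normr0.
have N0 : 0 < norm2 (grad_g r th) by rewrite lt_neqAle eq_sym nz sqrtr_ge0.
by rewrite normrM normrV ?unitfE // (gtr0_norm N0) ler_pdivrMr // mul1r.
Qed.

Variable Delta : R.
Hypothesis hD0 : 0 <= Delta.
Hypothesis hgap : forall a, a != astar -> Delta <= r astar - r a.

Lemma value_gap (th : 'I_K -> R) :
  (1 - softmax th astar) * Delta <= r astar - gval r th.
Proof.
have -> : r astar - gval r th = \sum_(a < K) softmax th a * (r astar - r a).
  rewrite /gval -[r astar in LHS]mul1r -(softmax_sum1 astar th) mulr_suml -sumrB.
  by apply: eq_bigr => a _; rewrite mulrBr.
have -> : 1 - softmax th astar = \sum_(a < K | a != astar) softmax th a.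
  by rewrite -(softmax_sum1 astar th) (bigD1 astar) //= addrC addrK.
rewrite [X in _ <= X](bigD1 astar) //= subrr mulr0 add0r mulr_suml.
apply: ler_sum => a ha; rewrite ler_wpM2l ?hgap //.
exact/ltW/(softmax_gt0 astar).
Qed.

Lemma grad_astar_lower_bound (th : 'I_K -> R) : softmax th astar <= 1 / 2 ->
  softmax th astar * Delta / 2 <= grad_g r th astar.
Proof.
move=> hp; have p0 := softmax_gt0 astar th astar.
rewrite grad_gE; apply: le_trans (ler_wpM2l (ltW p0) (value_gap th)).
rewrite mulrA -subr_ge0; set p := softmax th astar.
have -> : p * (1 - p) * Delta - p * Delta / 2 = p * Delta * (1 / 2 - p) by field.
by rewrite mulr_ge0 ?subr_ge0 // mulr_ge0 // ltW.
Qed.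

End Gradient.

Section Potential.
Variables (R : realType) (K : nat) (r : 'I_K -> R) (astar : 'I_K).
Hypothesis hr : forall a, 0 <= r a <= 1.
Variable eta : R.
Hypothesis heta : 0 <= eta.
Variable Delta : R.
Hypothesis hD0 : 0 < Delta.
Hypothesis hD1 : Delta <= 1.
Hypothesis hgap : forall a, a != astar -> Delta <= r astar - r a.

Local Notation rel := (rel astar).

Definition npg_step (th : 'I_K -> R) : 'I_K -> R :=
  fun a => th a + eta * (grad_g r th a / norm2 (grad_g r th)).

Lemma npg_iterS theta1 t :
  npg_iter eta r theta1 t.+1 = npg_step (npg_iter eta r theta1 t).
Proof. by []. Qed.

Lemma rel_step (th : 'I_K -> R) a : rel (npg_step th) a =
  rel th a + eta / norm2 (grad_g r th) * (grad_g r th a - grad_g r th astar).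
Proof. by rewrite /rel /npg_step; ring. Qed.

Lemma rel_step_bound (th : 'I_K -> R) a :
  `|rel (npg_step th) a - rel th a| <= 2 * eta.
Proof.
have -> : rel (npg_step th) a - rel th a =
  eta * (grad_g r th a / norm2 (grad_g r th) -
         grad_g r th astar / norm2 (grad_g r th)) by rewrite /rel /npg_step; ring.
rewrite normrM ger0_norm // mulrC ler_wpM2r //.
apply: le_trans (ler_normB _ _) _.
have := normalized_grad_abs_le1 r th a.
have := normalized_grad_abs_le1 r th astar.
lra.
Qed.

Definition eps : R := Delta / (2 * K%:R).
Definition thresh : R := ln eps.
Definition floor : R := thresh - 2 * eta.

Definition potential (th : 'I_K -> R) : R :=
  \sum_(a < K) Num.max (rel th a) floor.

Lemma eps_gt0 : 0 < eps.
Proof. by rewrite /eps divr_gt0 // mulr_gt0 // ltr0n K_gt0. Qed.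

Lemma K_eps : K%:R * eps = Delta / 2.
Proof. by rewrite /eps; field; rewrite pnatr_eq0 -lt0n (K_gt0 astar). Qed.

Lemma thresh_le0 : thresh <= 0.
Proof.
apply: ln_le0; rewrite /eps ler_pdivrMr ?mulr_gt0 ?ltr0n ?(K_gt0 astar) // mul1r.
apply: (le_trans hD1).
by rewrite -[X in X <= _]mul1r ler_pM ?ler1n ?(K_gt0 astar).
Qed.

Lemma grad_negligible_le (th : 'I_K -> R) a :
  softmax th astar <= 1 / 2 -> rel th a < thresh ->
  grad_g r th a <= grad_g r th astar.
Proof.
move=> hp ha; have hsmall := softmax_le_of_rel eps_gt0 (ltW ha).
have hstar := grad_astar_lower_bound (ltW hD0) hgap hp.
have eps_half : softmax th astar * eps <= softmax th astar * Delta / 2.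
  rewrite -mulrA ler_wpM2l ?(ltW (softmax_gt0 _ _ _)) // -K_eps.
  by rewrite ler_peMl ?(ltW eps_gt0) // ler1n (K_gt0 astar).
have := grad_abs_le_softmax astar hr th a; have := ler_norm (grad_g r th a); lra.
Qed.

Lemma grad_negligible_sum (th : 'I_K -> R) : softmax th astar <= 1 / 2 ->
  - \sum_(a < K | ~~ (thresh <= rel th a)) grad_g r th a <= grad_g r th astar.
Proof.
move=> hp; rewrite -sumrN.
apply: le_trans (grad_astar_lower_bound (ltW hD0) hgap hp).
have p0 := softmax_gt0 astar th astar.
apply: (@le_trans _ _ (\sum_(a < K) softmax th astar * eps)); last first.
  rewrite sumr_const card_ord -[_ *+ K]mulr_natr -mulrA [eps * _]mulrC.
  by rewrite K_eps mulrA.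
rewrite [X in _ <= X](bigID (fun a => ~~ (thresh <= rel th a))) /=.
rewrite -[X in X <= _]addr0 lerD ?sumr_ge0 // => [|a _]; last first.
  by rewrite mulr_ge0 ?ltW ?eps_gt0.
apply: ler_sum => a; rewrite -ltNge => ha.
have := softmax_le_of_rel eps_gt0 (ltW ha).
have := grad_abs_le_softmax astar hr th a.
have := ler_norm (- grad_g r th a); rewrite normrN; lra.
Qed.

Lemma grad_large_sum_le0 (th : 'I_K -> R) : softmax th astar <= 1 / 2 ->
  \sum_(a < K | thresh <= rel th a) (grad_g r th a - grad_g r th astar) <= 0.
Proof.
move=> hp; have hsmall := grad_negligible_sum hp.
have hstar0 : 0 <= grad_g r th astar.
  apply: le_trans (grad_astar_lower_bound (ltW hD0) hgap hp).
  by rewrite mulr_ge0 // mulr_ge0 ?(ltW hD0) ?(ltW (softmax_gt0 astar _ _)).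
have hsplit := grad_sum0 r astar th.
rewrite (bigID (fun a => thresh <= rel th a)) /= in hsplit.
have hcopies : grad_g r th astar <=
    \sum_(a < K | thresh <= rel th a) grad_g r th astar.
  rewrite (bigD1 astar) /= ?lerDl ?sumr_ge0 //.
  by rewrite /rel subrr thresh_le0.
rewrite sumrB; lra.
Qed.

Lemma floor_le_thresh : floor <= thresh.
Proof. by rewrite /floor lerBlDr lerDl mulr_ge0. Qed.

Lemma floor_le_rel_step (th : 'I_K -> R) a :
  thresh <= rel th a -> floor <= rel (npg_step th) a.
Proof.
move=> ha; have := rel_step_bound th a.
by rewrite ler_norml /floor => /andP[hb _]; lra.
Qed.

(* Phase 1: without a majority on astar, the potential does not increase.
   Negligible coordinates move down; the others move by k (v_a - v_astar),
   whose sum is nonpositive. *)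
Lemma potential_step_le (th : 'I_K -> R) :
  softmax th astar <= 1 / 2 -> potential (npg_step th) <= potential th.
Proof.
move=> hp; set k := eta / norm2 (grad_g r th).
have k0 : 0 <= k by rewrite divr_ge0 ?sqrtr_ge0.
rewrite /potential -subr_le0 -sumrB (bigID (fun a => thresh <= rel th a)) /=.
have small : \sum_(a < K | ~~ (thresh <= rel th a))
    (Num.max (rel (npg_step th) a) floor - Num.max (rel th a) floor) <= 0.
  apply: sumr_le0 => a ha; rewrite subr_le0 le_max2 // rel_step.
  by rewrite gerDl mulr_ge0_le0 // subr_le0 grad_negligible_le // ltNge.
have large : \sum_(a < K | thresh <= rel th a)
    (Num.max (rel (npg_step th) a) floor - Num.max (rel th a) floor) =
    k * \sum_(a < K | thresh <= rel th a) (grad_g r th a - grad_g r th astar).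
  rewrite mulr_sumr; apply: eq_bigr => a ha.
  rewrite !max_l ?floor_le_rel_step ?(le_trans floor_le_thresh ha) //.
  by rewrite rel_step addrC addKr.
have := mulr_ge0_le0 k0 (grad_large_sum_le0 hp); rewrite large; lra.
Qed.

Lemma potential_step_majority (th : 'I_K -> R) :
  1 / 2 < softmax th astar -> potential (npg_step th) <= K%:R * (2 * eta).
Proof.
move=> hp; rewrite mulr_natl -[in _ *+ K](card_ord K) -sumr_const.
apply: ler_sum => a _; rewrite ge_max; apply/andP; split.
  have := rel_le0_of_majority a hp; have := rel_step_bound th a.
  by rewrite ler_norml => /andP[_ ?] ?; lra.
by rewrite (le_trans floor_le_thresh) // (le_trans thresh_le0) // mulr_ge0.
Qed.

Lemma potential_iter_bounded theta1 t :
  potential (npg_iter eta r theta1 t) <=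
  Num.max (potential theta1) (K%:R * (2 * eta)).
Proof.
elim: t => [|t IH]; first by rewrite le_max lexx.
rewrite npg_iterS; set th := npg_iter eta r theta1 t.
have [hp|hp] := leP (softmax th astar) (1 / 2).
  exact: le_trans (potential_step_le hp) IH.
by rewrite le_max (potential_step_majority hp) orbT.
Qed.

Lemma rel_le_of_potential (th : 'I_K -> R) C a :
  potential th <= C -> rel th a <= C - K%:R * floor + floor.
Proof.
move=> hC; have hsum : Num.max (rel th a) floor - floor <=
    \sum_(b < K) (Num.max (rel th b) floor - floor).
  rewrite (bigD1 a) //= lerDl sumr_ge0 // => b _.
  by rewrite subr_ge0 le_max lexx orbT.
rewrite sumrB sumr_const card_ord -mulr_natl in hsum.
have : rel th a <= Num.max (rel th a) floor by rewrite le_max lexx.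
move: hC; rewrite /potential; lra.
Qed.

Lemma rel_iter_bounded theta1 :
  exists B, forall t a, rel (npg_iter eta r theta1 t) a <= B.
Proof.
eexists => t a; apply: rel_le_of_potential; exact: potential_iter_bounded.
Qed.

End Potential.

Lemma reward_gap (R : realType) (K : nat) (r : 'I_K -> R) (astar : 'I_K) :
  (forall a, a != astar -> r a < r astar) ->
  exists Delta : R, [/\ 0 < Delta, Delta <= 1 &
    forall a, a != astar -> Delta <= r astar - r a].
Proof.
move=> hstar; exists (\big[Num.min/1]_(a | a != astar) (r astar - r a)); split.
- apply: (big_ind (fun x => 0 < x)) => // [x y hx hy|a ha].
    by rewrite lt_min hx hy.
  by rewrite subr_gt0 hstar.
- exact: bigmin_le_id.
- by move=> a ha; exact: bigmin_le_cond.
Qed.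

Theorem lemma4 (R : realType) (K : nat) (hK : (2 <= K)%N)
  (r : 'I_K -> R) (hr : forall a, 0 <= r a <= 1)
  (astar : 'I_K) (hstar : forall a, a != astar -> r a < r astar)
  (theta1 : 'I_K -> R) :
  exists c : R, 0 < c /\
    forall t : nat, c <= softmax (npg_iter (1 / 6) r theta1 t) astar.
Proof.
have [Delta [hD0 hD1 hgap]] := reward_gap hstar.
have [B hB] := rel_iter_bounded hr (eta := 1 / 6) ltac:(lra) hD0 hD1 hgap theta1.
exists (1 / (K%:R * expR B)); split.
  by rewrite divr_gt0 // mulr_gt0 ?expR_gt0 // ltr0n (K_gt0 astar).
by move=> t; apply: softmax_astar_lower_bound; exact: hB.
Qed.
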